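(* Let $c\ge 0$, $m\ge 2$, and let $x=((x^1,n_1),\dots,(x^q,n_q))$ be a non-convergent Nash equilibrium of the best-worst rule $s=(c,m)$. If $n_i=n_j=2$, $k$ is a candidate located at $x^i$ and $l$ is a candidate located at $x^j$, then $v_k(x)=v_l(x)$.
   Context: Setting: voters' ideal points are distributed uniformly (unit mass, Lebesgue measure) on $[0,1]$. There are $m$ candidates; a profile is $x=(x_1,\dots,x_m)\in[0,1]^m$. A voter with ideal point $y$ ranks candidates by distance $|x_i-y|$ (closer is better); ties are broken by a fair lottery (uniformly random strict order among tied candidates). Under the best-worst rule $s=(c,m)$ ($c\ge0$), a candidate receives $1$ point from each voter ranking her first, $-c$ from each voter ranking her last ($m$-th), and $0$ otherwise; $v_i(x)$ is candidate $i$'s expected total points. A (pure-strategy Nash) equilibrium is a profile $x^*$ with $v_i(x^* )\ge v_i(t,x^*_{-i})$ for all $i$ and $t\in[0,1]$ ($(t,x_{-i})$ is $x$ with $x_i$ replaced by $t$); it is non-convergent if at least two platforms are distinct. A profile determines its distinct occupied positions $x^1<\dots<x^q$, with $n_j$ the number of candidates at $x^j$; we write $x=((x^1,n_1),\dots,(x^q,n_q))$. *)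

From Stdlib Require Import Reals Lra Lia List Classical ClassicalEpsilon.
Import ListNotations.
Open Scope R_scope.

(* A profile of m candidates is x : nat -> R, candidate j (0 <= j < m) at x j. *)

Definition dist (x : nat -> R) (j : nat) (y : R) : R := Rabs (x j - y).

Definition closest_b (m : nat) (x : nat -> R) (y : R) (j : nat) : bool :=
  forallb (fun k => if Rle_dec (dist x j y) (dist x k y) then true else false)
          (seq 0 m).

Definition farthest_b (m : nat) (x : nat -> R) (y : R) (j : nat) : bool :=
  forallb (fun k => if Rle_dec (dist x k y) (dist x j y) then true else false)
          (seq 0 m).

Definition n_closest (m : nat) (x : nat -> R) (y : R) : nat :=
  length (filter (closest_b m x y) (seq 0 m)).

Definition n_farthest (m : nat) (x : nat -> R) (y : R) : nat :=
  length (filter (farthest_b m x y) (seq 0 m)).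

(* Expected points candidate i receives from voter y under the best-worst rule
   (c,m) with fair-lottery tie breaking: probability of being ranked first is
   1/#(tied closest) if i is among the closest, probability of being ranked last
   is 1/#(tied farthest) if i is among the farthest. *)
Definition score (c : R) (m : nat) (x : nat -> R) (i : nat) (y : R) : R :=
  (if closest_b m x y i then / INR (n_closest m x y) else 0)
  - c * (if farthest_b m x y i then / INR (n_farthest m x y) else 0).

(* Riemann integral over [0,1] (the value of the integral when f is integrable;
   all score functions are step functions, hence integrable). *)
Definition integral01 (f : R -> R) : R :=
  epsilon (inhabits 0)
    (fun l => exists pr : Riemann_integrable f 0 1, RiemannInt pr = l).

(* v_i(x): expected total points of candidate i, voters uniform on [0,1]. *)
Definition v (c : R) (m : nat) (x : nat -> R) (i : nat) : R :=
  integral01 (score c m x i).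

Definition update (x : nat -> R) (i : nat) (t : R) : nat -> R :=
  fun j => if Nat.eq_dec j i then t else x j.

Definition is_profile (m : nat) (x : nat -> R) : Prop :=
  forall j, (j < m)%nat -> 0 <= x j <= 1.

Definition nash_eq (c : R) (m : nat) (x : nat -> R) : Prop :=
  is_profile m x /\
  forall i, (i < m)%nat -> forall t, 0 <= t <= 1 ->
    v c m (update x i t) i <= v c m x i.

Definition non_convergent (m : nat) (x : nat -> R) : Prop :=
  exists i j, (i < m)%nat /\ (j < m)%nat /\ x i <> x j.

Definition mult (m : nat) (x : nat -> R) (p : R) : nat :=
  length (filter (fun j => if Req_EM_T (x j) p then true else false) (seq 0 m)).

From Pilot Require Import Defs.
From Stdlib Require Import Reals.
Open Scope R_scope.
From Stdlib Require Import Lra Lia List Classical ClassicalEpsilon FunctionalExtensionality.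
Import ListNotations.

(* Let [l] sit at [p], [k] at [q <> p], each location shared by exactly two
   candidates.  Let [k] deviate to [p - eps] or to [p + eps] (clamped to
   [0, 1]).  For a voter away from the midpoints between [p] and the other
   locations, the two deviation scores sum to at least twice the score of
   [l]: if [l] is tied first (score <= 1/2), the move towards the voter makes
   [k] the unique first (score 1) and the other move keeps [k] off last; if
   [l] is tied last (score <= -c/2), the two moves score at least 0 and -c.
   The exceptional voters have measure O(eps), so the Nash inequalities give
   [v_l <= v_k + O(eps)] for all small [eps]; exchanging [k] and [l] gives
   equality. *)

Definition locally_constant_off (L : list R) (f : R -> R) : Prop :=
  forall u v, (forall z, In z L -> ~ u < z < v) ->
  forall y y', u < y < v -> u < y' < v -> f y = f y'.

(* A [sig] rather than an [exists]: [Riemann_integrable] lives in [Type]. *)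
Definition step_function (f : R -> R) : Type := {L : list R | locally_constant_off L f}.

Lemma Riemann_integrable_const_open (f : R -> R) (a b : R) : a <= b ->
  (forall y, a < y < b -> f y = f ((a + b) / 2)) -> Riemann_integrable f a b.
Proof.
  intros Hab Hf.
  assert (Hstep : IsStepFun f a b).
  { exists [a; b], [f ((a + b) / 2)].
    repeat split.
    - intros i Hi. simpl in Hi. destruct i; [simpl; lra | lia].
    - simpl. unfold Rmin. destruct (Rle_dec a b); lra.
    - simpl. unfold Rmax. destruct (Rle_dec a b); lra.
    - intros i Hi. simpl in Hi. destruct i; [| lia].
      intros y Hy. exact (Hf y Hy). }
  intros eps. exists (mkStepFun Hstep), (mkStepFun (StepFun_P4 a b 0)).
  split.
  - intros t _. simpl. unfold fct_cte. rewrite Rminus_diag, Rabs_R0. lra.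
  - rewrite StepFun_P18, Rmult_0_l, Rabs_R0. apply cond_pos.
Qed.

Lemma Riemann_integrable_constant_off (f : R -> R) (L : list R) (a b : R) : a <= b ->
  (forall u v, a <= u -> v <= b -> (forall z, In z L -> ~ u < z < v) ->
   forall y y', u < y < v -> u < y' < v -> f y = f y') ->
  Riemann_integrable f a b.
Proof.
  revert a b. induction L as [| z L IH]; intros a b Hab Hf.
  - apply Riemann_integrable_const_open; [exact Hab |].
    intros y Hy. apply (Hf a b); [lra | lra | intros z [] | exact Hy | lra].
  - assert (Hsub : forall a' b', a <= a' -> a' <= b' -> b' <= b -> ~ a' < z < b' ->
              Riemann_integrable f a' b').
    { intros a' b' Ha' Hab' Hb' Hz. apply IH; [exact Hab' |].
      intros u v Hu Hv HL. apply Hf; [lra | lra |].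
      intros w [<- | Hw]; [lra | exact (HL w Hw)]. }
    destruct (Rlt_dec a z), (Rlt_dec z b).
    + apply RiemannInt_P24 with z; apply Hsub; lra.
    + apply Hsub; lra.
    + apply Hsub; lra.
    + apply Hsub; lra.
Qed.

Lemma step_function_Riemann_integrable (f : R -> R) (a b : R) :
  step_function f -> a <= b -> Riemann_integrable f a b.
Proof.
  intros [L HL] Hab. apply (Riemann_integrable_constant_off f L a b Hab).
  intros u v _ _. apply HL.
Qed.

Lemma step_function_plus (f g : R -> R) :
  step_function f -> step_function g -> step_function (fun y => f y + g y).
Proof.
  intros [L1 H1] [L2 H2]. exists (L1 ++ L2). intros u v HL y y' Hy Hy'.
  rewrite (H1 u v) with y y', (H2 u v) with y y'; auto;
    intros z Hz; apply HL, in_or_app; auto.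
Qed.

Lemma integral01_RiemannInt (f : R -> R) (pr : Riemann_integrable f 0 1) :
  integral01 f = RiemannInt pr.
Proof.
  unfold integral01.
  assert (Hex : exists l, exists pr : Riemann_integrable f 0 1, RiemannInt pr = l)
    by (exists (RiemannInt pr), pr; reflexivity).
  destruct (epsilon_spec (inhabits 0) _ Hex) as [pr' <-].
  apply RiemannInt_P5.
Qed.

Lemma integral01_plus (f g : R -> R) : step_function f -> step_function g ->
  integral01 (fun y => f y + g y) = integral01 f + integral01 g.
Proof.
  intros Hf Hg.
  pose proof (step_function_Riemann_integrable f 0 1 Hf ltac:(lra)) as pf.
  pose proof (step_function_Riemann_integrable g 0 1 Hg ltac:(lra)) as pg.
  replace (fun y => f y + g y) with (fun y => f y + 1 * g y)
    by (apply functional_extensionality; intro; ring).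
  rewrite (integral01_RiemannInt _ (RiemannInt_P10 1 pf pg)), (RiemannInt_P13 pf pg),
    (integral01_RiemannInt f pf), (integral01_RiemannInt g pg).
  ring.
Qed.

Lemma integral01_le (f g : R -> R) : step_function f -> step_function g ->
  (forall y, 0 < y < 1 -> f y <= g y) -> integral01 f <= integral01 g.
Proof.
  intros Hf Hg Hfg.
  pose proof (step_function_Riemann_integrable f 0 1 Hf ltac:(lra)) as pf.
  pose proof (step_function_Riemann_integrable g 0 1 Hg ltac:(lra)) as pg.
  rewrite (integral01_RiemannInt f pf), (integral01_RiemannInt g pg).
  exact (RiemannInt_P19 pf pg ltac:(lra) Hfg).
Qed.

Lemma RiemannInt_le_const (f : R -> R) (a b K : R) (pr : Riemann_integrable f a b) :
  a <= b -> (forall y, a < y < b -> f y <= K) -> RiemannInt pr <= K * (b - a).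
Proof.
  intros Hab Hf. rewrite <- (RiemannInt_P15 (RiemannInt_P14 a b K)).
  exact (RiemannInt_P19 pr _ Hab Hf).
Qed.

Lemma Rle_of_small_errors (a b C e0 : R) : 0 < e0 -> 0 <= C ->
  (forall eps, 0 < eps <= e0 -> a <= b + C * eps) -> a <= b.
Proof.
  intros He0 HC H. apply Rle_plus_epsilon. intros d Hd.
  assert (Hq : 0 < d / (C + 1)) by (apply Rdiv_lt_0_compat; lra).
  set (eps := Rmin e0 (d / (C + 1))).
  assert (Heps : 0 < eps <= e0) by (split; [apply Rmin_glb_lt | apply Rmin_l]; lra).
  assert (Hd' : C * (d / (C + 1)) = d - d / (C + 1)) by (field; lra).
  assert (Hce : C * eps <= C * (d / (C + 1))) by (apply Rmult_le_compat_l; [lra | apply Rmin_r]).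
  specialize (H eps Heps). lra.
Qed.

Lemma exists_isolation_radius (x : nat -> R) (p : R) (m : nat) :
  exists e, 0 < e /\ forall t, (t < m)%nat -> x t <> p -> e < Rabs (x t - p).
Proof.
  induction m as [| m [e [He H]]].
  - exists 1. split; [lra | intros; lia].
  - destruct (Req_EM_T (x m) p) as [Heq | Hneq].
    + exists e. split; [exact He |]. intros t Ht Hn.
      destruct (Nat.eq_dec t m) as [-> | Htm]; [congruence | apply H; [lia | exact Hn]].
    + assert (Hpos : 0 < Rabs (x m - p)) by (apply Rabs_pos_lt; lra).
      exists (Rmin e (Rabs (x m - p) / 2)). split; [apply Rmin_glb_lt; lra |].
      intros t Ht Hn. destruct (Nat.eq_dec t m) as [-> | Htm].
      * pose proof (Rmin_r e (Rabs (x m - p) / 2)). lra.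
      * pose proof (Rmin_l e (Rabs (x m - p) / 2)). specialize (H t ltac:(lia) Hn). lra.
Qed.

Definition count_upto (P : nat -> bool) (m : nat) : nat := length (filter P (seq 0 m)).

Lemma count_upto_le_incl (P : nat -> bool) (m : nat) (s : list nat) :
  (forall t, (t < m)%nat -> P t = true -> In t s) -> (count_upto P m <= length s)%nat.
Proof.
  intros Hs. apply NoDup_incl_length; [apply NoDup_filter, seq_NoDup |].
  intros t Ht. apply filter_In in Ht as [Ht HP]. apply in_seq in Ht. apply Hs; [lia | exact HP].
Qed.

Lemma count_upto_ge_incl (P : nat -> bool) (m : nat) (s : list nat) : NoDup s ->
  (forall t, In t s -> (t < m)%nat /\ P t = true) -> (length s <= count_upto P m)%nat.
Proof.
  intros Hnd Hs. apply NoDup_incl_length; [exact Hnd |].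
  intros t Ht. destruct (Hs t Ht) as [Htm HP].
  apply filter_In. split; [apply in_seq; lia | exact HP].
Qed.

Lemma count_upto_mono (P Q : nat -> bool) (m : nat) :
  (forall t, (t < m)%nat -> P t = true -> Q t = true) -> (count_upto P m <= count_upto Q m)%nat.
Proof.
  intros HPQ. apply count_upto_le_incl. intros t Ht HP.
  apply filter_In. split; [apply in_seq; lia | exact (HPQ t Ht HP)].
Qed.

Lemma count_upto_pos (P : nat -> bool) (m i : nat) :
  (i < m)%nat -> P i = true -> (1 <= count_upto P m)%nat.
Proof.
  intros Hi HP. apply (count_upto_ge_incl P m [i]); [repeat constructor; intros [] |].
  intros t [<- | []]. auto.
Qed.

Definition share (P : nat -> bool) (m i : nat) : R :=
  if P i then / INR (count_upto P m) else 0.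

Lemma share_le_inv (P : nat -> bool) (m i n : nat) :
  (1 <= n)%nat -> (n <= count_upto P m)%nat -> share P m i <= / INR n.
Proof.
  intros Hn Hc. apply le_INR in Hn, Hc. simpl in Hn.
  unfold share. destruct (P i).
  - apply Rinv_le_contravar; lra.
  - left. apply Rinv_0_lt_compat. lra.
Qed.

Lemma share_ge_inv (P : nat -> bool) (m i n : nat) : (i < m)%nat -> P i = true ->
  (count_upto P m <= n)%nat -> / INR n <= share P m i.
Proof.
  intros Hi HP Hc. pose proof (le_INR _ _ (count_upto_pos P m i Hi HP)) as Hpos.
  apply le_INR in Hc. simpl in Hpos. unfold share. rewrite HP.
  apply Rinv_le_contravar; lra.
Qed.

Lemma share_bounds (P : nat -> bool) (m i : nat) : (i < m)%nat -> 0 <= share P m i <= 1.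
Proof.
  intros Hi. destruct (P i) eqn:HP; [| unfold share; rewrite HP; lra].
  pose proof (share_ge_inv P m i (count_upto P m) Hi HP (le_n _)) as Hge.
  pose proof (share_le_inv P m i 1 (le_n 1) (count_upto_pos P m i Hi HP)) as Hle.
  pose proof (le_INR _ _ (count_upto_pos P m i Hi HP)) as Hpos. simpl in Hpos, Hle.
  rewrite Rinv_1 in Hle. split; [| exact Hle].
  left. apply Rlt_le_trans with (/ INR (count_upto P m)); [apply Rinv_0_lt_compat; lra | exact Hge].
Qed.

Lemma share_false (P : nat -> bool) (m i : nat) : P i = false -> share P m i = 0.
Proof. intros HP. unfold share. now rewrite HP. Qed.

Lemma partner_exists (m : nat) (x : nat -> R) (j : nat) :
  mult m x (x j) = 2%nat -> (j < m)%nat -> exists j', (j' < m)%nat /\ j' <> j /\ x j' = x j.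
Proof.
  intros Hmult Hj. apply NNPP. intros Hno.
  assert (Hle : (count_upto (fun t => if Req_EM_T (x t) (x j) then true else false) m <= 1)%nat).
  { apply (count_upto_le_incl _ m [j]). intros t Ht Heq.
    destruct (Req_EM_T (x t) (x j)) as [Hxt | _]; [| discriminate].
    destruct (Nat.eq_dec t j) as [-> | Htj]; [now left |].
    exfalso. apply Hno. now exists t. }
  unfold mult in Hmult. unfold count_upto in Hle. lia.
Qed.

Lemma closest_b_iff (m : nat) (x : nat -> R) (y : R) (j : nat) :
  closest_b m x y j = true <-> forall t, (t < m)%nat -> Rabs (x j - y) <= Rabs (x t - y).
Proof.
  unfold closest_b, Defs.dist. rewrite forallb_forall.
  split; intros H t Ht.
  - specialize (H t ltac:(apply in_seq; lia)). destruct Rle_dec; [assumption | discriminate].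
  - apply in_seq in Ht. destruct Rle_dec as [_ | Hn]; [reflexivity |].
    exfalso. apply Hn, H. lia.
Qed.

Lemma farthest_b_iff (m : nat) (x : nat -> R) (y : R) (j : nat) :
  farthest_b m x y j = true <-> forall t, (t < m)%nat -> Rabs (x t - y) <= Rabs (x j - y).
Proof.
  unfold farthest_b, Defs.dist. rewrite forallb_forall.
  split; intros H t Ht.
  - specialize (H t ltac:(apply in_seq; lia)). destruct Rle_dec; [assumption | discriminate].
  - apply in_seq in Ht. destruct Rle_dec as [_ | Hn]; [reflexivity |].
    exfalso. apply Hn, H. lia.
Qed.

Lemma score_shares (c : R) (m : nat) (x : nat -> R) (i : nat) (y : R) :
  score c m x i y = share (closest_b m x y) m i - c * share (farthest_b m x y) m i.
Proof. reflexivity. Qed.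

Lemma score_bounds (c : R) (m : nat) (x : nat -> R) (i : nat) (y : R) :
  0 <= c -> (i < m)%nat -> - c <= score c m x i y <= 1.
Proof.
  intros Hc Hi. rewrite score_shares.
  pose proof (share_bounds (closest_b m x y) m i Hi).
  pose proof (share_bounds (farthest_b m x y) m i Hi). nra.
Qed.

Lemma score_nonneg_of_farther (c : R) (m : nat) (x : nat -> R) (i : nat) (y : R) :
  0 <= c -> (i < m)%nat ->
  (exists t, (t < m)%nat /\ Rabs (x i - y) < Rabs (x t - y)) -> 0 <= score c m x i y.
Proof.
  intros Hc Hi [t [Ht Hd]].
  assert (Hnf : farthest_b m x y i = false).
  { apply Bool.not_true_is_false. rewrite farthest_b_iff. intros H. specialize (H t Ht). lra. }
  rewrite score_shares, (share_false _ _ _ Hnf).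
  pose proof (share_bounds (closest_b m x y) m i Hi). lra.
Qed.

Lemma score_nonpos_of_closer (c : R) (m : nat) (x : nat -> R) (i : nat) (y : R) :
  0 <= c -> (i < m)%nat ->
  (exists t, (t < m)%nat /\ Rabs (x t - y) < Rabs (x i - y)) -> score c m x i y <= 0.
Proof.
  intros Hc Hi [t [Ht Hd]].
  assert (Hnc : closest_b m x y i = false).
  { apply Bool.not_true_is_false. rewrite closest_b_iff. intros H. specialize (H t Ht). lra. }
  rewrite score_shares, (share_false _ _ _ Hnc).
  pose proof (share_bounds (farthest_b m x y) m i Hi). nra.
Qed.

Lemma score_le_half_of_tied_closest (c : R) (m : nat) (x : nat -> R) (i i' : nat) (y : R) :
  0 <= c -> (i < m)%nat -> (i' < m)%nat -> i' <> i -> x i' = x i ->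
  closest_b m x y i = true -> score c m x i y <= / 2.
Proof.
  intros Hc Hi Hi' Hii' Hx Hcl.
  assert (Hcl' : closest_b m x y i' = true)
    by (rewrite closest_b_iff in *; rewrite Hx; exact Hcl).
  assert (H2 : (2 <= count_upto (closest_b m x y) m)%nat).
  { apply (count_upto_ge_incl _ m [i; i']).
    - repeat constructor; [intros [H | []]; congruence | intros []].
    - intros t [<- | [<- | []]]; auto. }
  pose proof (share_le_inv _ m i 2 ltac:(lia) H2) as Hle. simpl in Hle.
  rewrite score_shares.
  pose proof (share_bounds (farthest_b m x y) m i Hi). nra.
Qed.

Lemma score_le_neg_half_of_tied_farthest (c : R) (m : nat) (x : nat -> R) (i : nat) (y : R) :
  0 <= c -> (i < m)%nat -> mult m x (x i) = 2%nat ->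
  (exists t, (t < m)%nat /\ Rabs (x t - y) < Rabs (x i - y)) ->
  (forall t, (t < m)%nat -> x t <> x i -> Rabs (x t - y) < Rabs (x i - y)) ->
  score c m x i y <= - c / 2.
Proof.
  intros Hc Hi Hmult [t0 [Ht0 Hd0]] Hothers.
  assert (Hnc : closest_b m x y i = false).
  { apply Bool.not_true_is_false. rewrite closest_b_iff. intros H. specialize (H t0 Ht0). lra. }
  assert (Hf : farthest_b m x y i = true).
  { apply farthest_b_iff. intros t Ht. destruct (Req_EM_T (x t) (x i)) as [-> | Hn]; [lra |].
    left. exact (Hothers t Ht Hn). }
  assert (H2 : (count_upto (farthest_b m x y) m <= 2)%nat).
  { rewrite <- Hmult. apply count_upto_mono. intros t Ht Hft.
    destruct (Req_EM_T (x t) (x i)) as [_ | Hn]; [reflexivity | exfalso].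
    rewrite farthest_b_iff in Hft. specialize (Hft i Hi). specialize (Hothers t Ht Hn). lra. }
  pose proof (share_ge_inv _ m i 2 Hi Hf H2) as Hge. simpl in Hge.
  rewrite score_shares, (share_false _ _ _ Hnc). nra.
Qed.

Lemma score_ge1_of_unique_closest (c : R) (m : nat) (x : nat -> R) (i j : nat) (y : R) :
  0 <= c -> (i < m)%nat -> (j < m)%nat -> j <> i ->
  (forall t, (t < m)%nat -> t <> i -> Rabs (x i - y) < Rabs (x t - y)) ->
  1 <= score c m x i y.
Proof.
  intros Hc Hi Hj Hji Hothers.
  assert (Hnf : farthest_b m x y i = false).
  { apply Bool.not_true_is_false. rewrite farthest_b_iff. intros H.
    specialize (H j Hj). specialize (Hothers j Hj Hji). lra. }
  assert (Hcl : closest_b m x y i = true).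
  { apply closest_b_iff. intros t Ht. destruct (Nat.eq_dec t i) as [-> | Hti]; [lra |].
    left. exact (Hothers t Ht Hti). }
  assert (H1 : (count_upto (closest_b m x y) m <= 1)%nat).
  { apply (count_upto_le_incl _ m [i]). intros t Ht Hct.
    destruct (Nat.eq_dec t i) as [-> | Hti]; [now left | exfalso].
    rewrite closest_b_iff in Hct. specialize (Hct i Hi). specialize (Hothers t Ht Hti). lra. }
  pose proof (share_ge_inv _ m i 1 Hi Hcl H1) as Hge. simpl in Hge. rewrite Rinv_1 in Hge.
  rewrite score_shares, (share_false _ _ _ Hnf). lra.
Qed.

Lemma score_same_position (c : R) (m : nat) (x : nat -> R) (i j : nat) :
  x i = x j -> score c m x i = score c m x j.
Proof.
  intros Hx. apply functional_extensionality. intro y.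
  unfold score, closest_b, farthest_b, Defs.dist. now rewrite Hx.
Qed.

Definition same_ranking (m : nat) (x : nat -> R) (y y' : R) : Prop :=
  forall a b, (a < m)%nat -> (b < m)%nat ->
  (Rabs (x a - y) <= Rabs (x b - y) <-> Rabs (x a - y') <= Rabs (x b - y')).

Lemma closest_b_same_ranking (m : nat) (x : nat -> R) (y y' : R) (j : nat) :
  same_ranking m x y y' -> (j < m)%nat -> closest_b m x y j = closest_b m x y' j.
Proof.
  intros Hr Hj. apply Bool.eq_true_iff_eq. rewrite !closest_b_iff.
  split; intros H t Ht; apply (Hr j t Hj Ht), H, Ht.
Qed.

Lemma farthest_b_same_ranking (m : nat) (x : nat -> R) (y y' : R) (j : nat) :
  same_ranking m x y y' -> (j < m)%nat -> farthest_b m x y j = farthest_b m x y' j.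
Proof.
  intros Hr Hj. apply Bool.eq_true_iff_eq. rewrite !farthest_b_iff.
  split; intros H t Ht; apply (Hr t j Ht Hj), H, Ht.
Qed.

Lemma count_upto_ext (P Q : nat -> bool) (m : nat) :
  (forall t, (t < m)%nat -> P t = Q t) -> count_upto P m = count_upto Q m.
Proof.
  intros HPQ. unfold count_upto. f_equal. apply filter_ext_in.
  intros t Ht. apply in_seq in Ht. apply HPQ. lia.
Qed.

Lemma score_same_ranking (c : R) (m : nat) (x : nat -> R) (i : nat) (y y' : R) :
  same_ranking m x y y' -> (i < m)%nat -> score c m x i y = score c m x i y'.
Proof.
  intros Hr Hi. rewrite !score_shares. unfold share.
  rewrite (closest_b_same_ranking m x y y' i Hr Hi), (farthest_b_same_ranking m x y y' i Hr Hi).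
  rewrite (count_upto_ext (closest_b m x y) (closest_b m x y') m)
    by (intros; apply closest_b_same_ranking; assumption).
  rewrite (count_upto_ext (farthest_b m x y) (farthest_b m x y') m)
    by (intros; apply farthest_b_same_ranking; assumption).
  reflexivity.
Qed.

Lemma closer_constant_off_midpoint (xa xb u v y y' : R) :
  ~ u < (xa + xb) / 2 < v -> u < y < v -> u < y' < v ->
  (Rabs (xa - y) <= Rabs (xb - y) <-> Rabs (xa - y') <= Rabs (xb - y')).
Proof.
  intros Hmid Hy Hy'.
  assert (Hside : (xa + xb) / 2 <= u \/ v <= (xa + xb) / 2) by (apply NNPP; intro; apply Hmid; lra).
  unfold Rabs. destruct (Rcase_abs (xa - y)), (Rcase_abs (xb - y)),
    (Rcase_abs (xa - y')), (Rcase_abs (xb - y')); split; intro; lra.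
Qed.

Definition midpoints (m : nat) (x : nat -> R) : list R :=
  flat_map (fun a => map (fun b => (x a + x b) / 2) (seq 0 m)) (seq 0 m).

Lemma step_function_score (c : R) (m : nat) (x : nat -> R) (i : nat) :
  (i < m)%nat -> step_function (score c m x i).
Proof.
  intros Hi. exists (midpoints m x). intros u v Hmid y y' Hy Hy'.
  apply score_same_ranking; [| exact Hi].
  intros a b Ha Hb. apply closer_constant_off_midpoint with u v; [| exact Hy | exact Hy'].
  apply Hmid, in_flat_map. exists a. split; [apply in_seq; lia |].
  apply in_map_iff. exists b. split; [reflexivity | apply in_seq; lia].
Qed.

Definition bump (K eps z y : R) : R := if Rle_dec (Rabs (y - z)) eps then K else 0.

Fixpoint bumps (K eps : R) (B : list R) (y : R) : R :=
  match B with
  | [] => 0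
  | z :: B' => bump K eps z y + bumps K eps B' y
  end.

Lemma bumps_nonneg (K eps : R) (B : list R) (y : R) : 0 <= K -> 0 <= bumps K eps B y.
Proof.
  intros HK. induction B as [| z B IH]; simpl; [lra |].
  unfold bump. destruct Rle_dec; lra.
Qed.

Lemma bumps_ge (K eps : R) (B : list R) (y z : R) :
  0 <= K -> In z B -> Rabs (y - z) <= eps -> K <= bumps K eps B y.
Proof.
  intros HK Hz Hy. induction B as [| w B IH]; [destruct Hz |]. simpl.
  pose proof (bumps_nonneg K eps B y HK). unfold bump.
  destruct Hz as [-> | Hz]; destruct Rle_dec; try lra. specialize (IH Hz). lra.
Qed.

Lemma step_function_bump (K eps z : R) : step_function (bump K eps z).
Proof.
  exists [z - eps; z + eps]. intros u v Hcut y y' Hy Hy'.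
  assert (Hlo : z - eps <= u \/ v <= z - eps)
    by (apply NNPP; intro; apply (Hcut (z - eps)); simpl; auto; lra).
  assert (Hhi : z + eps <= u \/ v <= z + eps)
    by (apply NNPP; intro; apply (Hcut (z + eps)); simpl; auto; lra).
  unfold bump. revert Hlo Hhi. unfold Rabs.
  destruct (Rcase_abs (y - z)), (Rcase_abs (y' - z)); do 2 destruct Rle_dec; intros; lra.
Qed.

Lemma step_function_bumps (K eps : R) (B : list R) : step_function (bumps K eps B).
Proof.
  induction B as [| z B IH]; simpl.
  - exists []. intros u v _ y y' _ _. reflexivity.
  - exact (step_function_plus _ _ (step_function_bump K eps z) IH).
Qed.

Lemma integral01_bump_le (K eps z : R) : 0 <= K -> 0 <= eps ->
  integral01 (bump K eps z) <= 2 * eps * K.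
Proof.
  intros HK He.
  set (a := Rmax 0 (Rmin 1 (z - eps))).
  set (b := Rmax a (Rmin 1 (z + eps))).
  assert (Ha : 0 <= a <= 1) by (unfold a, Rmax, Rmin; repeat destruct Rle_dec; lra).
  assert (Hb : a <= b <= 1) by (unfold b, Rmax, Rmin in *; repeat destruct Rle_dec; lra).
  assert (Hab : b - a <= 2 * eps) by (unfold b, a, Rmax, Rmin; repeat destruct Rle_dec; lra).
  assert (Hint : forall a' b', a' <= b' -> Riemann_integrable (bump K eps z) a' b')
    by (intros; apply step_function_Riemann_integrable; [apply step_function_bump | assumption]).
  pose proof (Hint 0 a ltac:(lra)) as p1. pose proof (Hint a b ltac:(lra)) as p2.
  pose proof (Hint b 1 ltac:(lra)) as p3. pose proof (Hint a 1 ltac:(lra)) as p23.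
  rewrite (integral01_RiemannInt _ (Hint 0 1 ltac:(lra))),
    <- (RiemannInt_P26 p1 p23), <- (RiemannInt_P26 p2 p3 p23).
  assert (I1 : RiemannInt p1 <= 0 * (a - 0)).
  { apply RiemannInt_le_const; [lra |]. intros y Hy. unfold bump.
    destruct Rle_dec as [Hle | _]; [exfalso | lra]. revert Hle.
    unfold a, Rmax, Rmin in Hy. unfold Rabs.
    repeat destruct Rle_dec; destruct Rcase_abs; intros; lra. }
  assert (I2 : RiemannInt p2 <= K * (b - a)).
  { apply RiemannInt_le_const; [lra |]. intros y _. unfold bump. destruct Rle_dec; lra. }
  assert (I3 : RiemannInt p3 <= 0 * (1 - b)).
  { apply RiemannInt_le_const; [lra |]. intros y Hy. unfold bump.
    destruct Rle_dec as [Hle | _]; [exfalso | lra]. revert Hle.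
    unfold b, a, Rmax, Rmin in Hy. unfold Rabs.
    repeat destruct Rle_dec; destruct Rcase_abs; intros; lra. }
  nra.
Qed.

Lemma integral01_bumps_le (K eps : R) (B : list R) : 0 <= K -> 0 <= eps ->
  integral01 (bumps K eps B) <= INR (length B) * (2 * eps * K).
Proof.
  intros HK He. induction B as [| z B IH]; simpl bumps; simpl length.
  - change (integral01 (fct_cte 0) <= 0 * (2 * eps * K)).
    rewrite (integral01_RiemannInt _ (RiemannInt_P14 0 1 0)), RiemannInt_P15. lra.
  - rewrite (integral01_plus _ _ (step_function_bump K eps z) (step_function_bumps K eps B)), S_INR.
    pose proof (integral01_bump_le K eps z HK He). lra.
Qed.

Lemma update_eq (x : nat -> R) (k : nat) (q : R) : update x k q k = q.
Proof. unfold update. destruct (Nat.eq_dec k k); congruence. Qed.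

Lemma update_neq (x : nat -> R) (k t : nat) (q : R) : t <> k -> update x k q t = x t.
Proof. intros. unfold update. destruct (Nat.eq_dec t k); congruence. Qed.

Lemma score_update_nonneg (c : R) (m : nat) (x : nat -> R) (k : nat) (q y : R) :
  0 <= c -> (k < m)%nat ->
  (exists t, (t < m)%nat /\ t <> k /\ Rabs (q - y) < Rabs (x t - y)) ->
  0 <= score c m (update x k q) k y.
Proof.
  intros Hc Hk [t [Ht [Htk Hd]]]. apply score_nonneg_of_farther; [exact Hc | exact Hk |].
  exists t. rewrite update_eq, update_neq by exact Htk. auto.
Qed.

Lemma score_update_ge1 (c : R) (m : nat) (x : nat -> R) (k j : nat) (q y : R) :
  0 <= c -> (k < m)%nat -> (j < m)%nat -> j <> k ->
  (forall t, (t < m)%nat -> t <> k -> Rabs (q - y) < Rabs (x t - y)) ->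
  1 <= score c m (update x k q) k y.
Proof.
  intros Hc Hk Hj Hjk Hcloser. apply (score_ge1_of_unique_closest c m _ k j); auto.
  intros t Ht Htk. rewrite update_eq, update_neq by exact Htk. auto.
Qed.

Lemma separated_off_midpoint (z p y eps : R) : 4 * eps < Rabs (z - p) ->
  eps < Rabs (y - (z + p) / 2) ->
  Rabs (p - y) + 2 * eps < Rabs (z - y) \/ Rabs (z - y) < Rabs (p - y) - 2 * eps.
Proof.
  unfold Rabs. destruct (Rcase_abs (z - p)), (Rcase_abs (y - (z + p) / 2)),
    (Rcase_abs (z - y)), (Rcase_abs (p - y)); intros; lra.
Qed.

Section Deviation.

Variables (c : R) (m : nat) (x : nat -> R) (k l k' : nat).
Hypotheses (Hc : 0 <= c) (Hk : (k < m)%nat) (Hl : (l < m)%nat) (Hk' : (k' < m)%nat)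
  (Hk'k : k' <> k) (Hxk' : x k' = x k) (Hkl : x k <> x l) (Hmult : mult m x (x l) = 2%nat).

Lemma deviation_pointwise_l_closest (eps y qT qW : R) : 0 <= eps ->
  (forall t, (t < m)%nat -> x t <> x l -> Rabs (x l - y) + 2 * eps < Rabs (x t - y)) ->
  Rabs (qT - y) < Rabs (x l - y) -> Rabs (qW - y) <= Rabs (x l - y) + eps ->
  score c m x l y + score c m x l y <=
  score c m (update x k qT) k y + score c m (update x k qW) k y.
Proof.
  intros He Hfar HqT HqW.
  assert (Hlk : l <> k) by (intros ->; contradiction).
  destruct (partner_exists m x l Hmult Hl) as [l' [Hl' [Hl'l Hxl']]].
  assert (Hhalf : score c m x l y <= / 2).
  { apply (score_le_half_of_tied_closest c m x l l'); auto. apply closest_b_iff.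
    intros t Ht. destruct (Req_EM_T (x t) (x l)) as [-> | Hn]; [lra |].
    specialize (Hfar t Ht Hn). lra. }
  assert (HT1 : 1 <= score c m (update x k qT) k y).
  { apply (score_update_ge1 c m x k l); auto.
    intros t Ht _. destruct (Req_EM_T (x t) (x l)) as [-> | Hn]; [exact HqT |].
    specialize (Hfar t Ht Hn). lra. }
  assert (HW0 : 0 <= score c m (update x k qW) k y).
  { apply score_update_nonneg; [exact Hc | exact Hk |].
    exists k'. rewrite Hxk'. specialize (Hfar k Hk Hkl). repeat split; auto. lra. }
  lra.
Qed.

Lemma deviation_pointwise_rival_closer (eps y qT qW : R) : 0 <= eps ->
  (forall t, (t < m)%nat -> x t <> x l ->
   Rabs (x l - y) + 2 * eps < Rabs (x t - y) \/ Rabs (x t - y) < Rabs (x l - y) - 2 * eps) ->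
  (exists t0, (t0 < m)%nat /\ Rabs (x t0 - y) < Rabs (x l - y)) ->
  Rabs (qT - y) < Rabs (x l - y) -> Rabs (qW - y) <= Rabs (x l - y) + eps ->
  score c m x l y + score c m x l y <=
  score c m (update x k qT) k y + score c m (update x k qW) k y.
Proof.
  intros He Hsep Hcloser HqT HqW.
  assert (HT : 0 <= score c m (update x k qT) k y)
    by (apply score_update_nonneg; [exact Hc | exact Hk |];
        exists l; repeat split; auto; intros ->; contradiction).
  pose proof (score_bounds c m (update x k qW) k y Hc Hk) as HW.
  pose proof (score_nonpos_of_closer c m x l y Hc Hl Hcloser) as Hl0.
  destruct (classic (exists t, (t < m)%nat /\ x t <> x l /\
                              Rabs (x l - y) + 2 * eps < Rabs (x t - y)))
    as [[t1 [Ht1 [Hn1 Hd1]]] | Hnone_farther].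
  - assert (HW0 : 0 <= score c m (update x k qW) k y).
    { apply score_update_nonneg; [exact Hc | exact Hk |].
      destruct (Nat.eq_dec t1 k) as [-> | Ht1k].
      - exists k'. rewrite Hxk'. repeat split; auto. lra.
      - exists t1. repeat split; auto. lra. }
    lra.
  - assert (Hlast : score c m x l y <= - c / 2).
    { apply score_le_neg_half_of_tied_farthest; [exact Hc | exact Hl | exact Hmult | exact Hcloser |].
      intros t Ht Hn. destruct (Hsep t Ht Hn) as [Hfar | Hnear]; [| lra].
      exfalso. apply Hnone_farther. now exists t. }
    lra.
Qed.

Lemma deviation_pointwise (eps y qT qW : R) : 0 <= eps ->
  (forall t, (t < m)%nat -> x t <> x l -> 4 * eps < Rabs (x t - x l)) ->
  (forall t, (t < m)%nat -> eps < Rabs (y - (x t + x l) / 2)) ->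
  Rabs (qT - y) < Rabs (x l - y) -> Rabs (qW - x l) <= eps ->
  score c m x l y + score c m x l y <=
  score c m (update x k qT) k y + score c m (update x k qW) k y.
Proof.
  intros He Hgap Hmid HqT HqW.
  assert (Hsep : forall t, (t < m)%nat -> x t <> x l ->
            Rabs (x l - y) + 2 * eps < Rabs (x t - y) \/ Rabs (x t - y) < Rabs (x l - y) - 2 * eps)
    by (intros t Ht Hn; apply separated_off_midpoint; auto).
  assert (HqW' : Rabs (qW - y) <= Rabs (x l - y) + eps).
  { replace (qW - y) with ((qW - x l) + (x l - y)) by ring.
    pose proof (Rabs_triang (qW - x l) (x l - y)). lra. }
  destruct (classic (exists t, (t < m)%nat /\ x t <> x l /\
                              Rabs (x t - y) < Rabs (x l - y) - 2 * eps))
    as [[t0 [Ht0 [_ Hd0]]] | Hnone_closer].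
  - apply (deviation_pointwise_rival_closer eps y qT qW He Hsep); auto.
    exists t0. split; [exact Ht0 | lra].
  - apply (deviation_pointwise_l_closest eps); auto.
    intros t Ht Hn. destruct (Hsep t Ht Hn) as [Hfar | Hnear]; [exact Hfar |].
    exfalso. apply Hnone_closer. now exists t.
Qed.

Lemma deviation_value_bound (eps qL qR : R) : 0 < eps ->
  (forall t, (t < m)%nat -> x t <> x l -> 4 * eps < Rabs (x t - x l)) ->
  Rabs (qL - x l) <= eps -> Rabs (qR - x l) <= eps ->
  (forall y, 0 < y < 1 -> eps < Rabs (y - x l) ->
   Rabs (qL - y) < Rabs (x l - y) \/ Rabs (qR - y) < Rabs (x l - y)) ->
  v c m x l + v c m x l <=
  v c m (update x k qL) k + v c m (update x k qR) k + INR m * (2 * eps * (2 + 2 * c)).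
Proof.
  intros He Hgap HqL HqR Htoward.
  pose proof (step_function_score c m x l Hl) as Sl.
  pose proof (step_function_score c m (update x k qL) k Hk) as SL.
  pose proof (step_function_score c m (update x k qR) k Hk) as SR.
  (* Near a midpoint the pointwise inequality may fail by at most [2 + 2 c]. *)
  pose (B := map (fun t => (x t + x l) / 2) (seq 0 m)).
  pose proof (step_function_bumps (2 + 2 * c) eps B) as SE.
  pose proof (integral01_bumps_le (2 + 2 * c) eps B ltac:(lra) ltac:(lra)) as IE.
  replace (length B) with m in IE by (unfold B; now rewrite length_map, length_seq).
  unfold v. rewrite <- (integral01_plus _ _ Sl Sl), <- (integral01_plus _ _ SL SR).
  eapply Rle_trans; [| apply Rplus_le_compat_l, IE].
  rewrite <- (integral01_plus _ _ (step_function_plus _ _ SL SR) SE).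
  apply integral01_le; [apply step_function_plus; assumption | apply step_function_plus;
    [apply step_function_plus |]; assumption |].
  intros y Hy.
  destruct (classic (exists t, (t < m)%nat /\ Rabs (y - (x t + x l) / 2) <= eps))
    as [[t [Ht Hyt]] | Hnear].
  - assert (HE : 2 + 2 * c <= bumps (2 + 2 * c) eps B y).
    { apply bumps_ge with ((x t + x l) / 2); [lra | | exact Hyt].
      apply in_map_iff. exists t. split; [reflexivity | apply in_seq; lia]. }
    pose proof (score_bounds c m x l y Hc Hl).
    pose proof (score_bounds c m (update x k qL) k y Hc Hk).
    pose proof (score_bounds c m (update x k qR) k y Hc Hk).
    lra.
  - assert (Hmid : forall t, (t < m)%nat -> eps < Rabs (y - (x t + x l) / 2))
      by (intros t Ht; apply Rnot_le_lt; intro; apply Hnear; now exists t).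
    assert (Hyl : eps < Rabs (y - x l))
      by (specialize (Hmid l Hl); now replace ((x l + x l) / 2) with (x l) in Hmid by field).
    pose proof (bumps_nonneg (2 + 2 * c) eps B y ltac:(lra)).
    destruct (Htoward y Hy Hyl) as [HqLy | HqRy].
    + pose proof (deviation_pointwise eps y qL qR (Rlt_le _ _ He) Hgap Hmid HqLy HqR). lra.
    + pose proof (deviation_pointwise eps y qR qL (Rlt_le _ _ He) Hgap Hmid HqRy HqL). lra.
Qed.

End Deviation.

Lemma clamped_moves (p eps : R) : 0 <= p <= 1 -> 0 < eps ->
  Rabs (Rmax 0 (p - eps) - p) <= eps /\ Rabs (Rmin 1 (p + eps) - p) <= eps /\
  (forall y, 0 < y < 1 -> eps < Rabs (y - p) ->
   Rabs (Rmax 0 (p - eps) - y) < Rabs (p - y) \/ Rabs (Rmin 1 (p + eps) - y) < Rabs (p - y)).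
Proof.
  intros Hp He. unfold Rmax, Rmin. repeat split.
  - unfold Rabs. destruct Rle_dec, Rcase_abs; lra.
  - unfold Rabs. destruct Rle_dec, Rcase_abs; lra.
  - intros y Hy. unfold Rabs. destruct (Rlt_or_le y p); [left | right];
      destruct Rle_dec; repeat destruct Rcase_abs; intros; lra.
Qed.

Lemma value_le_of_doubled_positions (c : R) (m : nat) (x : nat -> R) (k l : nat) :
  0 <= c -> nash_eq c m x -> (k < m)%nat -> (l < m)%nat -> x k <> x l ->
  mult m x (x k) = 2%nat -> mult m x (x l) = 2%nat -> v c m x l <= v c m x k.
Proof.
  intros Hc [Hprof Hnash] Hk Hl Hkl Hmk Hml.
  destruct (partner_exists m x k Hmk Hk) as [k' [Hk' [Hk'k Hxk']]].
  destruct (exists_isolation_radius x (x l) m) as [e [He Hgap]].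
  pose proof (Hprof l Hl) as Hp.
  apply (Rle_of_small_errors _ _ (INR m * (2 + 2 * c)) (e / 8));
    [lra | pose proof (pos_INR m); nra |].
  intros eps Heps.
  assert (Hgap' : forall t, (t < m)%nat -> x t <> x l -> 4 * eps < Rabs (x t - x l))
    by (intros t Ht Hn; specialize (Hgap t Ht Hn); lra).
  destruct (clamped_moves (x l) eps Hp (proj1 Heps)) as [HqL [HqR Htoward]].
  pose proof (deviation_value_bound c m x k l k' Hc Hk Hl Hk' Hk'k Hxk' Hkl Hml
                eps _ _ (proj1 Heps) Hgap' HqL HqR Htoward) as Hbound.
  pose proof (Hnash k Hk (Rmax 0 (x l - eps))
                ltac:(unfold Rmax; destruct Rle_dec; lra)) as HL.
  pose proof (Hnash k Hk (Rmin 1 (x l + eps))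
                ltac:(unfold Rmin; destruct Rle_dec; lra)) as HR.
  replace (INR m * (2 * eps * (2 + 2 * c))) with (2 * (INR m * (2 + 2 * c) * eps))
    in Hbound by ring.
  lra.
Qed.

Theorem lemma3 (c : R) (m : nat) (x : nat -> R) (k l : nat) :
  0 <= c -> (2 <= m)%nat ->
  nash_eq c m x -> non_convergent m x ->
  (k < m)%nat -> (l < m)%nat ->
  mult m x (x k) = 2%nat -> mult m x (x l) = 2%nat ->
  v c m x k = v c m x l.
Proof.
  intros Hc _ Hnash _ Hk Hl Hmk Hml.
  destruct (Req_EM_T (x k) (x l)) as [Hxkl | Hxkl].
  - unfold v. now rewrite (score_same_position c m x k l Hxkl).
  - apply Rle_antisym; apply value_le_of_doubled_positions; auto.
Qed.
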